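(* Let $Y$ be a random simplicial complex on $[n]=\{0,\dots,n\}$ drawn from the lower model in the medial regime, with constants $0<p\le P<1$ such that $p\le p_\sigma\le P$ for all $\sigma$. Then $Y$ is simply connected (connected with trivial fundamental group) asymptotically almost surely, i.e. with probability tending to $1$ as $n\to\infty$.
   Context: Lower model: each non-empty proper subset $\sigma\subsetneq[n]$ is included independently with probability $p_\sigma$ into a random hypergraph $X$, and $Y$ is the largest simplicial complex contained in $X$ ($\sigma\in Y$ iff every non-empty $\tau\subseteq\sigma$ lies in $X$). Medial regime: $p,P\in(0,1)$ are independent of $n$. *)

From HB Require Import structures.
From mathcomp Require Import all_boot all_order all_algebra.
From mathcomp Require Import all_classical all_reals all_analysis.
From Stdlib Require Import Relations.Relation_Operators.
Set Implicit Arguments. Unset Strict Implicit. Unset Printing Implicit Defensive.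
Import Order.TTheory GRing.Theory Num.Theory.
Local Open Scope ring_scope.

(* A (finite abstract) simplicial complex / hypergraph on vertex type T is a
   set of faces {set {set T}}.  Vertex v belongs to Y iff [set v] \in Y. *)

Section Complexes.
Variable T : finType.

Definition lowerY (X : {set {set T}}) : {set {set T}} :=
  [set s : {set T} | (s != finset.set0) &&
     [forall t : {set T}, ((t != finset.set0) && (t \subset s)) ==> (t \in X)]].

(* Edge relation of the 1-skeleton (u = v allowed when [set u] is a vertex). *)
Definition cedge (Y : {set {set T}}) : rel T := fun u v => [set u; v] \in Y.

(* Elementary moves on edge paths (Spanier's edge-path group):
   u v w ~ u w  when {u,v,w} is a simplex, and  u u ~ u. *)
Inductive ep_step (Y : {set {set T}}) : seq T -> seq T -> Prop :=
| ep_tri (a b : seq T) (u v w : T) :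
    [set u; v; w] \in Y -> ep_step Y (a ++ [:: u, v, w & b]) (a ++ [:: u, w & b])
| ep_dup (a b : seq T) (u : T) :
    [set u] \in Y -> ep_step Y (a ++ [:: u, u & b]) (a ++ [:: u & b]).

Definition ep_equiv (Y : {set {set T}}) : seq T -> seq T -> Prop :=
  clos_refl_sym_trans (seq T) (ep_step Y).

(* Y is simply connected: nonempty, connected, and every closed edge path
   x :: s (x a vertex, consecutive vertices spanning simplices, ending at x)
   is edge-path equivalent to the trivial path [:: x], i.e. the edge-path group
   (= fundamental group of the geometric realization) is trivial. *)
Definition simply_connected (Y : {set {set T}}) : Prop :=
  [/\ exists v : T, [set v] \in Y,
      (forall u v : T, [set u] \in Y -> [set v] \in Y ->
         exists s : seq T, path (cedge Y) u s /\ last u s = v)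
    & (forall (x : T) (s : seq T), [set x] \in Y ->
         path (cedge Y) x s -> last x s = x -> ep_equiv Y (x :: s) [:: x])].
End Complexes.

(* Lower model on vertex set [n] = {0,...,n} = 'I_n.+1.  Each non-empty proper
   subset s is put in X independently with probability ps s. *)
Definition admissible (n : nat) (s : {set 'I_n.+1}) : bool :=
  (s != finset.set0) && (s != finset.setT).

Definition lower_weight (R : realType) (n : nat) (ps : {set 'I_n.+1} -> R)
  (X : {set {set 'I_n.+1}}) : R :=
  if X \subset [set s | admissible s] then
    \prod_(s : {set 'I_n.+1} | admissible s) (if s \in X then ps s else 1 - ps s)
  else 0.

Definition prob_simply_connected (R : realType) (n : nat)
  (ps : {set 'I_n.+1} -> R) : R :=
  \sum_(X : {set {set 'I_n.+1}} | `[< simply_connected (lowerY X) >])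
     lower_weight ps X.

(* Call z an apex of the vertices a, b, c, d when every subset of
   {z, a, b, c, d} containing z is a face of X.  If every four vertices have
   an apex, then Y is simply connected: on a closed edge path x y1 y2 y3 ...,
   an apex z of {x, y1, y2, y3} lets the path slide across the triangles of
   the cone on z to x z y3 ..., which is one edge shorter.
   For four fixed vertices, the events "z is an apex" for the n - 3 other
   vertices z concern pairwise disjoint families of at most 32 faces, so they
   are independent and each has probability at least p^32.  A union bound over
   the (n+1)^4 quadruples bounds the failure probability by
   (n+1)^4 (1 - p^32)^(n-3), which tends to 0. *)

From HB Require Import structures.
From mathcomp Require Import all_boot all_order all_algebra.
From mathcomp Require Import all_classical all_reals all_analysis.
From mathcomp Require Import ring lra zify.
From Stdlib Require Import Relations.Relation_Operators.
(* After all_classical, so that set0, setUC, subsetP, ... are the finite-set ones. *)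
From mathcomp Require Import fintype finset.
Import Order.TTheory GRing.Theory Num.Theory numFieldNormedType.Exports.
Set Implicit Arguments. Unset Strict Implicit. Unset Printing Implicit Defensive.
Local Open Scope ring_scope.

#[local] Arguments rst_trans {A R x y z}.

Section EdgePaths.
Variables (T : finType) (Y : {set {set T}}).

Lemma ep_insert (a b : seq T) (u v w : T) : [set u; v; w] \in Y ->
  ep_equiv Y (a ++ [:: u, w & b]) (a ++ [:: u, v, w & b]).
Proof. by move=> uvw; apply/rst_sym/rst_step/ep_tri. Qed.

Lemma ep_backtrack (a b : seq T) (u v : T) : [set u; v] \in Y -> [set u] \in Y ->
  ep_equiv Y (a ++ [:: u, v, u & b]) (a ++ u :: b).
Proof.
move=> uv u1; have uvu : [set u; v; u] = [set u; v].
  by apply/setP => w; rewrite !inE; case: (w == u); rewrite ?orbF.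
apply: (rst_trans (y := a ++ [:: u, u & b])); apply: rst_step.
  by apply: ep_tri; rewrite uvu.
exact: ep_dup.
Qed.

End EdgePaths.

Definition cone (T : finType) (Q : {set T}) (z : T) : {set {set T}} :=
  [set s : {set T} | (s \subset z |: Q) && (z \in s)].

Lemma cone_sub_powerset (T : finType) (Q : {set T}) (z : T) :
  cone Q z \subset powerset (z |: Q).
Proof. by apply/subsetP => s; rewrite !inE => /andP[]. Qed.

Lemma disjoint_cone (T : finType) (Q : {set T}) (z1 z2 : T) :
  z1 \notin Q -> z2 \notin Q -> z1 != z2 -> [disjoint cone Q z1 & cone Q z2].
Proof.
move=> z1Q z2Q z12; apply/pred0P => s; rewrite /= !inE.
apply/negP => /andP[/andP[s_z1Q z1s] /andP[_ z2s]].
by move: (subsetP s_z1Q z2 z2s); rewrite !inE (negbTE z2Q) orbF eq_sym (negbTE z12).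
Qed.

Section ConeComplex.
Variables (T : finType) (X : {set {set T}}).
Local Notation Y := (lowerY X).

Lemma lowerY_sub (s t : {set T}) : s \in Y -> t \subset s -> t != set0 -> t \in Y.
Proof.
rewrite !inE => /andP[_ /forallP sX] ts t_n0; rewrite t_n0 /=.
apply/forallP => u; apply/implyP => /andP[u_n0 ut].
by apply: (implyP (sX u)); rewrite u_n0 (subset_trans ut ts).
Qed.

Lemma lowerY_vertex (s : {set T}) (u : T) : s \in Y -> u \in s -> [set u] \in Y.
Proof.
move=> sY us; apply: lowerY_sub sY _ _; first by rewrite sub1set.
by apply/set0Pn; exists u; rewrite inE.
Qed.

Lemma cone_lowerY (Q : {set T}) (z : T) (s : {set T}) : cone Q z \subset X ->
  s \subset Q -> (s \in Y) || (s == set0) -> z |: s \in Y.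
Proof.
move=> coneX sQ sY; rewrite inE; apply/andP; split.
  by apply/set0Pn; exists z; rewrite !inE eqxx.
apply/forallP => t; apply/implyP => /andP[t_n0 t_zs].
case zt: (z \in t).
  apply: (subsetP coneX); rewrite inE zt andbT.
  by apply: (subset_trans t_zs); apply: setUS.
have ts : t \subset s.
  apply/subsetP => x xt; move: (subsetP t_zs x xt); rewrite !inE.
  by case/orP => // /eqP xz; move: zt; rewrite -xz xt.
case/orP: sY => [|/eqP s0]; last by move: t_n0; rewrite s0 subset0 in ts; rewrite ts.
by rewrite inE => /andP[_ /forallP sX]; apply: (implyP (sX t)); rewrite t_n0 ts.
Qed.

Section Apex.
Variables (Q : {set T}) (z : T).
Hypothesis coneX : cone Q z \subset X.

Lemma apex_vertex : [set z] \in Y.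
Proof.
by rewrite -[[set z]]setU0; apply: (cone_lowerY coneX); rewrite ?sub0set ?eqxx ?orbT.
Qed.

Lemma apex_edge (u : T) : u \in Q -> [set u] \in Y -> [set z; u] \in Y.
Proof. by move=> uQ uY; apply: (cone_lowerY coneX); rewrite ?sub1set ?uY. Qed.

Lemma apex_triangle (u v : T) : u \in Q -> v \in Q -> [set u; v] \in Y ->
  [set u; z; v] \in Y.
Proof.
move=> uQ vQ uvY; rewrite (_ : [set u; z; v] = z |: [set u; v]).
  by apply: (cone_lowerY coneX); rewrite ?uvY // subUset !sub1set uQ vQ.
by apply/setP => w; rewrite !inE; case: (w == u); case: (w == z).
Qed.

End Apex.

Definition all4_coned : Prop :=
  forall a b c d : T, exists z, cone [set a; b; c; d] z \subset X.

Hypothesis coned : all4_coned.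

Lemma all4_coned_loop (x : T) (s : seq T) : [set x] \in Y ->
  path (cedge Y) x s -> last x s = x -> ep_equiv Y (x :: s) [:: x].
Proof.
have [k] := ubnP (size s); elim: k s x => // k IHk s x.
case: s => [|y1 [|y2 [|y3 b]]] /= size_s xY.
- by move=> *; apply: rst_refl.
- by move=> _ ->; apply/rst_step/(ep_dup [::] [::]).
- by move=> /andP[xy1 _] ->; apply: (ep_backtrack [::] [::]).
move=> /and4P[xy1 y1y2 y2y3 p_b] last_b.
have [z coneX] := coned x y1 y2 y3.
have [xQ y1Q y2Q y3Q] : [/\ x \in [set x; y1; y2; y3], y1 \in [set x; y1; y2; y3],
  y2 \in [set x; y1; y2; y3] & y3 \in [set x; y1; y2; y3]].
  by rewrite !inE !eqxx !orbT.
have zy1 := apex_edge coneX y1Q (lowerY_vertex y1y2 (setU11 y1 _)).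
have zy2 := apex_edge coneX y2Q (lowerY_vertex y2y3 (setU11 y2 _)).
have zy3 := apex_edge coneX y3Q (lowerY_vertex y2y3 (setU1r _ (set11 y3))).
have zY := apex_vertex coneX.
apply: (rst_trans (ep_insert [::] (y2 :: y3 :: b) (apex_triangle coneX xQ y1Q xy1))).
apply: (rst_trans (ep_insert [:: x; z] (y3 :: b) (apex_triangle coneX y1Q y2Q y1y2))).
apply: (rst_trans (ep_insert [:: x; z; y1; z] b (apex_triangle coneX y2Q y3Q y2y3))).
apply: (rst_trans (ep_backtrack [:: x] [:: y2, z, y3 & b] zy1 zY)).
apply: (rst_trans (ep_backtrack [:: x] (y3 :: b) zy2 zY)).
apply: IHk => //=; rewrite /cedge p_b zy3 !andbT setUC.
exact: (apex_edge coneX xQ xY).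
Qed.

Theorem all4_coned_simply_connected (x0 : T) : simply_connected Y.
Proof.
split.
- by have [z coneX] := coned x0 x0 x0 x0; exists z; apply: apex_vertex coneX.
- move=> u v uY vY; have [z coneX] := coned u v u v.
  have uQ : u \in [set u; v; u; v] by rewrite !inE eqxx.
  have vQ : v \in [set u; v; u; v] by rewrite !inE eqxx orbT.
  exists [:: z; v]; split => //=; rewrite /cedge andbT (apex_edge coneX vQ vY).
  by rewrite setUC (apex_edge coneX uQ uY).
- by move=> x s xY; apply: all4_coned_loop.
Qed.

End ConeComplex.

Section ProductWeight.
Variables (R : comPzRingType) (K : finType) (a : K -> R).

Definition pweight (X : {set K}) : R :=
  \prod_k (if k \in X then a k else 1 - a k).

Definition pexpect (f : {set K} -> R) : R := \sum_X pweight X * f X.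

Lemma pexpectB (f g : {set K} -> R) :
  pexpect (fun X => f X - g X) = pexpect f - pexpect g.
Proof. by rewrite /pexpect -sumrB; apply: eq_bigr => X _; rewrite mulrBr. Qed.

Lemma pexpect_sum (I : finType) (f : I -> {set K} -> R) :
  pexpect (fun X => \sum_i f i X) = \sum_i pexpect (f i).
Proof. by rewrite /pexpect exchange_big; apply: eq_bigr => X _; rewrite mulr_sumr. Qed.

Lemma pexpect_subset (A : {set K}) :
  pexpect (fun X => (A \subset X)%:R) = \prod_(k in A) a k.
Proof.
have weightA X : pweight X * (A \subset X)%:R =
    \prod_k (if k \in X then a k else (1 - a k) * (k \notin A)%:R).
  case: (boolP (A \subset X)) => [AX | /subsetPn[k kA kX]].
    rewrite mulr1; apply: eq_bigr => k _; case: ifPn => // kX.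
    by rewrite (contraNN (subsetP AX k)) // mulr1.
  by rewrite mulr0 (bigD1 k) //= (negbTE kX) kA mulr0 mul0r.
transitivity (\prod_k (a k + (1 - a k) * (k \notin A)%:R)).
  by rewrite bigA_distr; apply: eq_big => // X _; rewrite weightA.
rewrite [RHS]big_mkcond; apply: eq_bigr => k _.
by case: (k \in A); rewrite ?mulr0 ?addr0 // mulr1 addrC subrK.
Qed.

Lemma pexpect1 : pexpect (fun _ => 1) = 1.
Proof.
transitivity (pexpect (fun X => (set0 \subset X)%:R)).
  by apply: eq_bigr => X _; rewrite sub0set.
by rewrite pexpect_subset big_set0.
Qed.

Lemma pexpect_disjoint (A : {set K}) (Fs : seq {set K}) :
  pairwise [rel B C : {set K} | [disjoint B & C]] (A :: Fs) ->
  pexpect (fun X => (A \subset X)%:R * \prod_(F <- Fs) (~~ (F \subset X))%:R) =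
  \prod_(k in A) a k * \prod_(F <- Fs) (1 - \prod_(k in F) a k).
Proof.
elim: Fs A => [|F Fs IHFs] A.
  rewrite big_nil mulr1 -pexpect_subset => _.
  by apply: eq_bigr => X _; rewrite big_nil mulr1.
(* [A <= X] (1 - [F <= X]) = [A <= X] - [A :|: F <= X], and A :|: F is still
   disjoint from the remaining sets. *)
rewrite !pairwise_cons /= => /andP[/andP[AF AFs] /andP[FFs pFs]].
have AUF_Fs : all [pred G : {set K} | [disjoint A :|: F & G]] Fs.
  apply/allP => G GFs; rewrite /= -setI_eq0 setIUl setU_eq0 !setI_eq0.
  by move: (allP AFs _ GFs) (allP FFs _ GFs) => /= -> ->.
transitivity (pexpect (fun X =>
    (A \subset X)%:R * \prod_(G <- Fs) (~~ (G \subset X))%:R -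
    (A :|: F \subset X)%:R * \prod_(G <- Fs) (~~ (G \subset X))%:R)).
  apply: eq_bigr => X _; rewrite big_cons subUset.
  by case: (A \subset X); case: (F \subset X); rewrite /= ?mul0r ?mul1r ?subr0 ?subrr.
have prodAF : \prod_(k in A :|: F) a k = \prod_(k in A) a k * \prod_(k in F) a k.
  by rewrite -bigU //; apply: eq_bigl => k; rewrite !inE.
by rewrite pexpectB !IHFs /= ?AFs ?AUF_Fs ?pFs // big_cons prodAF; ring.
Qed.

End ProductWeight.

Section ProductWeightOrder.
Variables (R : numDomainType) (K : finType) (a : K -> R).
Hypothesis a01 : forall k, 0 <= a k <= 1.

Lemma pweight_ge0 (X : {set K}) : 0 <= pweight a X.
Proof.
apply: prodr_ge0 => k _; have /andP[a_ge0 a_le1] := a01 k.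
by case: ifP; rewrite ?subr_ge0.
Qed.

Lemma ler_pexpect (f g : {set K} -> R) :
  (forall X, f X <= g X) -> pexpect a f <= pexpect a g.
Proof. by move=> fg; apply: ler_sum => X _; apply: ler_wpM2l; rewrite ?pweight_ge0. Qed.

End ProductWeightOrder.

Section LowerModel.
Variables (R : realType) (n : nat) (p : R) (q : {set 'I_n.+1} -> R).
Hypotheses (p_ge0 : 0 <= p) (p_le1 : p <= 1) (n_ge5 : (5 <= n)%N).
Hypothesis q_bounds : forall s, admissible s -> p <= q s <= 1.
Local Notation T := 'I_n.+1.

Definition face_prob (s : {set T}) : R := if admissible s then q s else 0.

Lemma face_prob01 s : 0 <= face_prob s <= 1.
Proof.
rewrite /face_prob; case: ifP => [/q_bounds/andP[pq ->]|_]; last by rewrite lexx ler01.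
by rewrite (le_trans p_ge0 pq).
Qed.

Lemma lower_weightE X : lower_weight q X = pweight face_prob X.
Proof.
rewrite /lower_weight /pweight; case: ifPn => [X_adm | /subsetPn[s sX]]; last first.
  by rewrite inE => s_nadm; rewrite (bigD1 s) //= sX /face_prob (negbTE s_nadm) mul0r.
rewrite [RHS](bigID (@admissible n)) /= [X in _ * X]big1 ?mulr1 => [|s s_nadm].
  by apply: eq_bigr => s s_adm; rewrite /face_prob s_adm.
have sX : s \notin X by apply: contra s_nadm => /(subsetP X_adm); rewrite inE.
by rewrite (negbTE sX) /face_prob (negbTE s_nadm) subr0.
Qed.

Lemma prob_simply_connectedE : prob_simply_connected q =
  pexpect face_prob (fun X => (`[< simply_connected (lowerY X) >])%:R).
Proof.
rewrite /prob_simply_connected big_mkcond; apply: eq_bigr => X _.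
by rewrite lower_weightE; case: asboolP; rewrite ?mulr1 ?mulr0.
Qed.

Lemma prob_simply_connected_le1 : prob_simply_connected q <= 1.
Proof.
rewrite prob_simply_connectedE -[X in _ <= X](pexpect1 face_prob).
by apply: (ler_pexpect face_prob01) => X; case: asboolP.
Qed.

Lemma cone_admissible (Q : {set T}) (z : T) (s : {set T}) :
  (#|Q| <= 4)%N -> s \in cone Q z -> admissible s.
Proof.
rewrite inE => Q4 /andP[s_zQ zs]; rewrite /admissible; apply/andP; split.
  by apply/set0Pn; exists z.
apply: contraTneq n_ge5 => sT; rewrite -ltnNge.
have := subset_leq_card s_zQ; rewrite sT cardsT card_ord cardsU1 => /leq_trans; apply.
exact: leq_add (leq_b1 _) Q4.
Qed.

Lemma cone_prob_ge (Q : {set T}) (z : T) :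
  (#|Q| <= 4)%N -> p ^+ 32 <= \prod_(s in cone Q z) face_prob s.
Proof.
move=> Q4; have cone32 : (#|cone Q z| <= 32)%N.
  apply: leq_trans (subset_leq_card (cone_sub_powerset Q z)) _.
  rewrite card_powerset (leq_pexp2l (m := 2) _ (_ : #|z |: Q| <= 5)%N) //.
  by rewrite cardsU1; apply: leq_add (leq_b1 _) Q4.
apply: le_trans (ler_wiXn2l p_ge0 p_le1 cone32) _; rewrite -prodr_const.
apply: ler_prod => s /(cone_admissible Q4) s_adm.
by rewrite p_ge0 /face_prob s_adm; case/andP: (q_bounds s_adm).
Qed.

Lemma pexpect_no_apex (Q : {set T}) : (#|Q| <= 4)%N ->
  pexpect face_prob (fun X => \prod_(z in ~: Q) (~~ (cone Q z \subset X))%:R)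
  <= (1 - p ^+ 32) ^+ (n - 3).
Proof.
move=> Q4; set cones := [seq cone Q z | z <- enum (~: Q)].
have disj : pairwise [rel B C : {set {set T}} | [disjoint B & C]] (set0 :: cones).
  rewrite pairwise_cons; apply/andP; split.
    by apply/allP => F _; rewrite /= -setI_eq0 set0I.
  rewrite pairwise_map; apply: (sub_in_pairwise (P := mem (~: Q))).
  - by move=> z1 z2; rewrite !inE; apply: disjoint_cone.
  - by apply/allP => z; rewrite mem_enum.
  - by rewrite -uniq_pairwise enum_uniq.
have -> : pexpect face_prob (fun X => \prod_(z in ~: Q) (~~ (cone Q z \subset X))%:R)
    = \prod_(z in ~: Q) (1 - \prod_(s in cone Q z) face_prob s).
  have := pexpect_disjoint face_prob disj; rewrite big_set0 mul1r big_map big_enum => <-.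
  by apply: eq_bigr => X _; rewrite sub0set mul1r big_map big_enum.
apply: le_trans (_ : \prod_(z in ~: Q) (1 - p ^+ 32) <= _).
  apply: ler_prod => z _; rewrite lerD2l lerN2 cone_prob_ge // subr_ge0.
  by rewrite andbT; apply: prodr_ile1 => s _; apply: face_prob01.
rewrite prodr_const; apply: ler_wiXn2l.
- by rewrite subr_ge0 exprn_ile1.
- by rewrite gerDl oppr_le0 exprn_ge0.
- by move: Q4 (cardsC Q); rewrite card_ord; lia.
Qed.

Definition quad (t : T * T * T * T) : {set T} := [set t.1.1.1; t.1.1.2; t.1.2; t.2].

Lemma card_quad (t : T * T * T * T) : (#|quad t| <= 4)%N.
Proof.
rewrite (_ : quad t = [set x in [:: t.1.1.1; t.1.1.2; t.1.2; t.2]]).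
  by rewrite cardsE (leq_trans (card_size _)).
by apply/setP => x; rewrite !inE !orbA.
Qed.

Lemma prob_simply_connected_ge :
  1 - n.+1%:R ^+ 4 * (1 - p ^+ 32) ^+ (n - 3) <= prob_simply_connected q.
Proof.
pose coned (X : {set {set T}}) := [forall t, [exists z, cone (quad t) z \subset X]].
pose no_apex t (X : {set {set T}}) : R :=
  \prod_(z in ~: quad t) (~~ (cone (quad t) z \subset X))%:R.
have not_coned X : (~~ coned X)%:R <= \sum_t no_apex t X.
  have no_apex_ge0 t : 0 <= no_apex t X by apply: prodr_ge0 => z _; apply: ler0n.
  case: (boolP (coned X)) => [_ | /forallPn[t /existsPn no_z]].
    by rewrite sumr_ge0.
  rewrite (bigD1 t) //= (_ : no_apex t X = 1) ?lerDl ?sumr_ge0 //.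
  by apply: big1 => z _; rewrite no_z.
rewrite prob_simply_connectedE.
apply: le_trans (_ : pexpect face_prob (fun X => (coned X)%:R) <= _); last first.
  apply: (ler_pexpect face_prob01) => X.
  case: (boolP (coned X)) => [/forallP coned_X | _]; last exact: ler0n.
  rewrite asboolT //; apply: (all4_coned_simply_connected _ ord0) => a b c d.
  exact/existsP/(coned_X (a, b, c, d)).
have -> : pexpect face_prob (fun X => (coned X)%:R) =
    pexpect face_prob (fun X => 1 - (~~ coned X)%:R).
  by apply: eq_bigr => X _; case: (coned X); rewrite /= ?subr0 ?subrr.
rewrite pexpectB pexpect1.
rewrite lerD2l lerN2 (le_trans (ler_pexpect face_prob01 not_coned)) // pexpect_sum.
apply: le_trans (ler_sum _ (fun t _ => pexpect_no_apex (card_quad t))) _.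
by rewrite sumr_const -natrX mulr_natl !card_prod card_ord !expnS expn0 muln1 !mulnA.
Qed.

End LowerModel.

Section PolynomialTimesGeometric.
Variable R : archiRealFieldType.
Local Open Scope classical_set_scope.

Lemma onemX_ge (x : R) (k : nat) : 0 <= x <= 1 -> 1 - k%:R * x <= (1 - x) ^+ k.
Proof.
case/andP=> x_ge0 x_le1; elim: k => [|k IHk]; first by rewrite mul0r subr0 expr0.
rewrite exprSr; apply: le_trans (_ : (1 - k%:R * x) * (1 - x) <= _).
  by rewrite -natr1; have k_ge0 : 0 <= k%:R :> R by []; nra.
by apply: ler_wpM2r; rewrite ?subr_ge0.
Qed.

Lemma onemX_mulDn_le1 (x : R) (k : nat) :
  0 <= x <= 1 -> (1 - x) ^+ k * (1 + k%:R * x) <= 1.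
Proof.
case/andP=> x_ge0 x_le1; elim: k => [|k IHk]; first by rewrite mul0r addr0 expr0 mulr1.
rewrite exprSr -mulrA; apply: le_trans IHk.
apply: ler_wpM2l; first by rewrite exprn_ge0 ?subr_ge0.
by rewrite -natr1; have k_ge0 : 0 <= k%:R :> R by []; nra.
Qed.

Lemma natr_onemX_le (x : R) (k : nat) : 0 < x <= 1 -> k.+1%:R * (1 - x) ^+ k <= x^-1.
Proof.
case/andP=> x_gt0 x_le1; rewrite -(ler_pM2l x_gt0) mulfV ?gt_eqF //.
have x01 : 0 <= x <= 1 by rewrite ltW.
have := onemX_mulDn_le1 k x01.
have y_ge0 : 0 <= (1 - x) ^+ k by rewrite exprn_ge0 ?subr_ge0.
by rewrite -natr1; have k_ge0 : 0 <= k%:R :> R by []; nra.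
Qed.

Lemma cvg_natrX_exprB (d k : nat) (r : R) : 0 <= r < 1 ->
  (n.+1%:R ^+ d * r ^+ (n - k)) @[n --> \oo] --> 0.
Proof.
(* By Bernoulli r <= s := (1 - x)^(d+1), and (m+1)(1 - x)^m <= 1/x bounds
   the n-th term by C/(n+1). *)
case/andP=> r_ge0 r_lt1; set x := (1 - r) / d.+1%:R; set s := (1 - x) ^+ d.+1.
have x_gt0 : 0 < x by rewrite divr_gt0 ?subr_gt0.
have x_le1 : x <= 1.
  rewrite ler_pdivrMr // mul1r; apply: le_trans (_ : 1 <= _).
    by rewrite lerBlDr lerDl.
  by rewrite ler1n.
have x01 : 0 <= x <= 1 by rewrite ltW.
have r_le_s : r <= s.
  have := onemX_ge d.+1 x01; rewrite mulrC divfK ?pnatr_eq0 //.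
  by rewrite opprB addrC subrK.
have s_ge0 : 0 <= s by rewrite exprn_ge0 // subr_ge0.
have natr_s m : m.+1%:R ^+ d.+1 * s ^+ m <= x ^- d.+1.
  rewrite -exprM mulnC exprM -exprMn -exprVn.
  rewrite lerXn2r ?natr_onemX_le ?x_gt0 ?nnegrE ?invr_ge0 ?(ltW x_gt0) //.
  by rewrite mulr_ge0 ?exprn_ge0 // subr_ge0.
set C := k.+1%:R ^+ d.+1 * x ^- d.+1.
have C_harmonic : C * harmonic n @[n --> \oo] --> (0 : R).
  by rewrite -(mulr0 C); apply: cvgMl_tmp cvg_harmonic.
apply: (squeeze_cvgr _ (cvg_cst 0) C_harmonic).
near=> n; rewrite mulr_ge0 ?exprn_ge0 //= ler_pdivlMr // mulrAC -exprSr.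
have [m ->] : exists m, n = (m + k)%N.
  by exists (n - k)%N; rewrite subnK //; near: n; exact: nbhs_infty_ge.
rewrite addnK; apply: le_trans (_ : (k.+1 * m.+1)%:R ^+ d.+1 * s ^+ m <= _).
  by rewrite ler_pM ?exprn_ge0 ?lerXn2r ?nnegrE ?ler_nat //; lia.
by rewrite natrM exprMn -mulrA ler_wpM2l ?exprn_ge0.
Unshelve. all: by end_near.
Qed.

End PolynomialTimesGeometric.

Local Open Scope classical_set_scope.

Theorem proposition6p3 (R : realType) (p P : R)
  (ps : forall n : nat, {set 'I_n.+1} -> R) :
  0 < p -> p <= P -> P < 1 ->
  (forall (n : nat) (s : {set 'I_n.+1}), admissible s -> p <= ps n s /\ ps n s <= P) ->
  prob_simply_connected (ps n) @[n --> \oo] --> (1 : R^o).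
Proof.
move=> p_gt0 pP P1 ps_bounds.
have p_le1 : p <= 1 by rewrite (le_trans pP) ?ltW.
have q_bounds n s : admissible s -> p <= ps n s <= 1.
  by case/(ps_bounds n) => -> /le_trans ->; rewrite ?ltW.
have r01 : 0 <= 1 - p ^+ 32 < 1.
  by rewrite subr_ge0 exprn_ile1 ?(ltW p_gt0) //= gtrDl oppr_lt0 exprn_gt0.
have lower_cvg : (1 - n.+1%:R ^+ 4 * (1 - p ^+ 32) ^+ (n - 3)) @[n --> \oo] --> (1 : R^o).
  by rewrite -[X in _ --> X]subr0; apply: cvgB; [exact: cvg_cst | exact: cvg_natrX_exprB].
apply: (squeeze_cvgr _ lower_cvg (cvg_cst _)).
near=> n; have n_ge5 : (5 <= n)%N by near: n; exact: nbhs_infty_ge.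
rewrite (prob_simply_connected_ge (ltW p_gt0) p_le1 n_ge5 (q_bounds n)) /=.
exact: prob_simply_connected_le1 (ltW p_gt0) (q_bounds n).
Unshelve. all: by end_near.
Qed.
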